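(* For every positive integer $\gamma$ there exist infinitely many finite groups $G$ (pairwise non-isomorphic) having exactly $d(|G|)+\gamma$ cyclic subgroups; for instance, for every integer $u\ge1$, the group $G=C_3\rtimes C_{2^u 5^{\gamma-1}}$, where a generator of $C_{2^u5^{\gamma-1}}$ acts on $C_3$ by inversion, has this property.
   Context: $C_k$ denotes the cyclic group of order $k$; $d(k)$ denotes the number of positive divisors of $k$. *)

From mathcomp Require Import all_boot all_fingroup all_solvable.
Set Implicit Arguments. Unset Strict Implicit. Unset Printing Implicit Defensive.

Definition ndivisors (k : nat) : nat := size (divisors k).

Definition ncyclic (gT : finGroupType) (G : {set gT}) : nat :=
  #|[set H : {group gT} | (H \subset G) && cyclic H]|.

Definition inv_sdprod_C3 (gT : finGroupType) (G K H : {group gT}) (h : gT)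
    (m : nat) : Prop :=
  (K ><| H = G)%g /\ cyclic K /\ #|K| = 3 /\ H = <[h]>%G :> {set gT} /\
  #[h]%g = m /\ (forall k, k \in K -> (k ^ h = k^-1)%g).

From mathcomp Require Import all_boot all_fingroup all_solvable zify.
Set Implicit Arguments. Unset Strict Implicit. Unset Printing Implicit Defensive.

(* Let G = K ><| <[h]> with h inverting K and #[h] = m even.  The subgroup
   A = K <[h^2]> has index 2 and is centralised by h^2; when K is cyclic of
   order coprime to m/2, A is cyclic, so its cyclic subgroups are counted by
   d(|A|).  Every cyclic subgroup outside A is <[k h^e]> for a unique k in K
   and a unique odd divisor e of m (for a generator k h^i, e = gcd(m, i)),
   so there are |K| times as many of them as odd divisors of m.  For |K| = 3
   and m = 2^u 5^(gamma-1) this gives 2 u gamma + 3 gamma = d(3 m) + gamma.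
   The group itself is the semidirect product Z_3 ><| Z_m that MathComp
   builds for extended dihedral groups. *)

Lemma perm_divisorsM m n : 0 < m -> 0 < n -> coprime m n ->
  perm_eq (divisors (m * n)) [seq d1 * d2 | d1 <- divisors m, d2 <- divisors n].
Proof.
move=> m_gt0 n_gt0 co_mn.
have gcd_mul d1 d2 : d1 %| m -> d2 %| n -> gcdn m (d1 * d2) = d1 /\ gcdn n (d1 * d2) = d2.
  move=> d1m d2n; have co_m_d2 := coprime_dvdr d2n co_mn.
  have co_n_d1 : coprime n d1 by rewrite coprime_sym (coprime_dvdl d1m).
  by rewrite Gauss_gcdl ?Gauss_gcdr //; split; apply/gcdn_idPr.
apply: uniq_perm (divisors_uniq _) _ _.
  apply: allpairs_uniq (divisors_uniq _) (divisors_uniq _) _.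
  move=> _ _ /allpairsP[[d1 d2] [d1m d2n ->]] /allpairsP[[e1 e2] [e1m e2n ->]] /= E.
  move: d1m d2n e1m e2n; rewrite /= -!dvdn_divisors // => d1m d2n e1m e2n.
  have [g1 g2] := gcd_mul _ _ d1m d2n; have [h1 h2] := gcd_mul _ _ e1m e2n.
  by congr pair; [rewrite -g1 E h1 | rewrite -g2 E h2].
move=> d; rewrite -dvdn_divisors ?muln_gt0 ?m_gt0 //; apply/idP/allpairsP.
  move=> dmn; pose e := gcdn d m.
  have e_gt0 : 0 < e by rewrite gcdn_gt0 m_gt0 orbT.
  have ed : e %| d by apply: dvdn_gcdl.
  exists (e, d %/ e); rewrite /= -!dvdn_divisors // dvdn_gcdr mulnC divnK //.
  split=> //.
  rewrite -(dvdn_pmul2l e_gt0) mulnC divnK // muln_gcdl dvdn_gcd dmn andbT.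
  exact: dvdn_mulr.
by case=> [[d1 d2] /= [+ + ->]]; rewrite -!dvdn_divisors //; apply: dvdn_mul.
Qed.

Lemma ndivisorsM m n : 0 < m -> 0 < n -> coprime m n ->
  ndivisors (m * n) = ndivisors m * ndivisors n.
Proof.
by move=> *; rewrite /ndivisors (perm_size (perm_divisorsM _ _ _)) ?size_allpairs.
Qed.

Lemma perm_divisors_pfactor p k : prime p ->
  perm_eq (divisors (p ^ k)) [seq p ^ i | i <- iota 0 k.+1].
Proof.
move=> p_pr; have p_gt1 := prime_gt1 p_pr.
apply: uniq_perm (divisors_uniq _) _ _.
  by rewrite map_inj_uniq ?iota_uniq //; apply: expnI.
move=> d; rewrite -dvdn_divisors ?expn_gt0 ?prime_gt0 //; apply/idP/mapP.
  by case/(dvdn_pfactor _ _ p_pr)=> i ik ->; exists i; rewrite // mem_iota.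
by case=> i; rewrite mem_iota => /andP[_ ik] ->; apply: dvdn_exp2l.
Qed.

Lemma ndivisors_pfactor p k : prime p -> ndivisors (p ^ k) = k.+1.
Proof.
move=> p_pr; rewrite /ndivisors (perm_size (perm_divisors_pfactor _ p_pr)).
by rewrite size_map size_iota.
Qed.

Lemma count_odd_divisors_pow2M k n : odd n ->
  count odd (divisors (2 ^ k * n)) = ndivisors n.
Proof.
move=> odd_n; have n_gt0 : 0 < n by case: n odd_n.
rewrite -size_filter /ndivisors; apply: perm_size.
apply: uniq_perm (filter_uniq _ (divisors_uniq _)) (divisors_uniq _) _ => d.
rewrite mem_filter -!dvdn_divisors ?muln_gt0 ?expn_gt0 //.
apply/andP/idP=> [[odd_d] | d_n]; first by rewrite Gauss_dvdr // coprimeXr ?coprimen2.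
by rewrite (dvdn_odd d_n) // dvdn_mull.
Qed.

Lemma ndivisors_3_pow2_pow5 u b : ndivisors (3 * (2 ^ u * 5 ^ b)) = 2 * (u.+1 * b.+1).
Proof.
have co_25 : coprime (2 ^ u) (5 ^ b) by rewrite coprimeXl // coprimeXr.
have co_3 : coprime 3 (2 ^ u * 5 ^ b) by rewrite coprimeMr !coprimeXr.
by rewrite !ndivisorsM ?muln_gt0 ?expn_gt0 // !ndivisors_pfactor.
Qed.

Lemma card_subgroups_cyclic (gT : finGroupType) (A : {group gT}) : cyclic A ->
  #|[set C : {group gT} | C \subset A]| = ndivisors #|A|.
Proof.
move=> cycA; rewrite cardE /ndivisors -(size_map (fun C : {group gT} => #|C|)).
apply: perm_size; apply: uniq_perm _ (divisors_uniq _) _.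
  rewrite map_inj_in_uniq ?enum_uniq // => C D; rewrite !mem_enum !inE => sCA sDA.
  by move/eqP; rewrite -(eq_subG_cyclic cycA sCA sDA) => /eqP /val_inj.
move=> d; rewrite -dvdn_divisors //; apply/mapP/idP => [[C] | dA].
  by rewrite mem_enum inE => sCA ->; apply: cardSg.
have [a defA] := cyclicP cycA.
have d_dvd_a : d %| #[a]%g by rewrite orderE -defA.
have := cycle_sub_group d_dvd_a; rewrite -defA; set D := <[_]>%G => defD.
have : D \in [set C : {group gT} | C \subset A & #|C| == d] by rewrite defD set11.
by rewrite inE => /andP[sDA /eqP oD]; exists D; rewrite // mem_enum inE.
Qed.

Section InvertingSdprod.
Local Open Scope group_scope.

Variables (gT : finGroupType) (G K : {group gT}) (h : gT).
Hypotheses (defG : K ><| <[h]> = G) (invK : {in K, forall k, k ^ h = k^-1})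
  (even_h : 2 %| #[h]).

Let sKG : K \subset G. Proof. by rewrite -(sdprodW defG) mulG_subl. Qed.
Let Gh : h \in G. Proof. by rewrite -cycle_subG -(sdprodW defG) mulG_subr. Qed.
Let tiKh : K :&: <[h]> = 1. Proof. by case/sdprod_context: defG. Qed.

Lemma conjg_expK i : {in K, forall k, k ^ (h ^+ i) = if odd i then k^-1 else k}.
Proof.
elim: i => [|i IHi] k Kk; first by rewrite conjg1.
by rewrite expgS conjgM invK // IHi ?groupV //=; case: (odd i); rewrite ?invgK.
Qed.

Lemma odd_expg_eq i j : h ^+ i = h ^+ j -> odd i = odd j.
Proof.
move/eqP; rewrite eq_expg_mod_order => /eqP /(congr1 (modn^~ 2)).
by rewrite !modn_dvdm // !modn2; case: (odd i); case: (odd j).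
Qed.

Lemma sdprod_cycle_decomp x : x \in G -> exists2 k, k \in K & exists i, x = k * h ^+ i.
Proof.
rewrite -(sdprodW defG) => /mulsgP[k y Kk /cycleP[i ->] ->].
by exists k => //; exists i.
Qed.

Lemma sdprod_cycle_decomp_uniq k1 k2 i j : k1 \in K -> k2 \in K ->
  k1 * h ^+ i = k2 * h ^+ j -> k1 = k2 /\ h ^+ i = h ^+ j.
Proof.
move=> Kk1 Kk2 E.
have : k2^-1 * k1 \in K :&: <[h]>.
  rewrite inE groupM ?groupV //= (canRL (mulgK (h ^+ i)) E) mulgA mulKg.
  by rewrite groupM ?groupV ?mem_cycle.
rewrite tiKh => /set1P /eqP; rewrite -eq_mulVg1 => /eqP Ek.
by subst k2; split=> //; apply: (mulgI k1).
Qed.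

Lemma expg_commK j k : k \in K -> h ^+ j * k = (if odd j then k^-1 else k) * h ^+ j.
Proof.
move=> Kk; rewrite [RHS]conjgC conjg_expK; last by case: (odd j); rewrite ?groupV.
by case: (odd j); rewrite ?invgK.
Qed.

Lemma expg_mulK_odd k i s : k \in K -> odd i ->
  (k * h ^+ i) ^+ s = (if odd s then k else 1) * h ^+ (i * s).
Proof.
move=> Kk odd_i; elim: s => [|s IHs]; first by rewrite muln0 mulg1.
rewrite expgSr IHs -mulgA (mulgA (h ^+ (i * s))) expg_commK // oddM odd_i /=.
rewrite -mulgA -expgD mulgA addnC -mulnS.
by case: (odd s); rewrite ?mulgV ?mul1g.
Qed.

Local Notation A := (K <*> <[h ^+ 2]>)%G.

Lemma cycle_expg2_cent : <[h ^+ 2]> \subset 'C(K).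
Proof.
rewrite cycle_subG; apply/centP=> k Kk.
by rewrite /commute [RHS]conjgC conjg_expK.
Qed.

Let defA : A = K * <[h ^+ 2]> :> {set gT}.
Proof. exact: cent_joinEr cycle_expg2_cent. Qed.

Lemma mem_sdprod_expg2 k i : k \in K -> (k * h ^+ i \in A) = ~~ odd i.
Proof.
move=> Kk; rewrite defA; apply/idP/idP.
  case/mulsgP=> k' y Kk' /cycleP[j ->]; rewrite -expgM => E.
  by have [_ /odd_expg_eq ->] := sdprod_cycle_decomp_uniq Kk Kk' E; rewrite oddM.
move=> even_i; rewrite mem_mulg // -(odd_double_half i) (negbTE even_i) add0n.
by rewrite -mul2n expgM mem_cycle.
Qed.

Lemma sdprod_expg2_sub : A \subset G.
Proof. by rewrite join_subG sKG cycle_subG groupX. Qed.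

Lemma card_sdprod_expg2 : #|A| = (#|K| * (#[h] %/ 2))%N.
Proof.
rewrite defA TI_cardMg -?orderE ?orderXdiv //.
by apply/trivgP; rewrite -tiKh setIS // cycle_subG mem_cycle.
Qed.

Lemma cyclic_sdprod_expg2 : cyclic K -> coprime #|K| (#[h] %/ 2) -> cyclic A.
Proof.
move=> cycK coKh; apply: cyclicY; rewrite ?cycle_cyclic ?cycle_expg2_cent //.
by rewrite -orderE orderXdiv.
Qed.

Lemma cycle_odd_expg_gcd k i : k \in K -> odd i ->
  <[k * h ^+ i]> = <[k * h ^+ gcdn #[h] i]>.
Proof.
move=> Kk odd_i; set e := gcdn #[h] i.
have odd_e : odd e := dvdn_odd (dvdn_gcdr _ _) odd_i.
have [t def_i] := dvdnP (dvdn_gcdr #[h] i); rewrite -/e in def_i.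
have odd_t : odd t by move: odd_i; rewrite def_i oddM => /andP[].
have he_hi : <[h ^+ e]> = <[h ^+ i]>.
  apply/eqP; rewrite (eq_subG_cyclic (cycle_cyclic h)) ?cycle_subG ?mem_cycle //.
  by rewrite -!orderE orderXdiv ?dvdn_gcdl // orderXgcd.
have [s hs] : exists s, h ^+ e = h ^+ (i * s).
  have /cycleP[s ->] : h ^+ e \in <[h ^+ i]> by rewrite -he_hi cycle_id.
  by exists s; rewrite expgM.
have odd_s : odd s by move: (odd_expg_eq hs); rewrite odd_e oddM odd_i.
apply/eqP; rewrite eqEsubset !cycle_subG; apply/andP; split; apply/cycleP.
  by exists t; rewrite expg_mulK_odd // odd_t mulnC -def_i.
by exists s; rewrite expg_mulK_odd // odd_s -hs.
Qed.

Lemma mem_cycle_odd k1 k2 i j : k1 \in K -> k2 \in K -> odd i -> odd j ->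
  k1 * h ^+ i \in <[k2 * h ^+ j]> -> k1 = k2 /\ h ^+ i \in <[h ^+ j]>.
Proof.
move=> Kk1 Kk2 odd_i odd_j /cycleP[s]; rewrite expg_mulK_odd //.
case odd_s: (odd s) => E.
  by have [-> ->] := sdprod_cycle_decomp_uniq Kk1 Kk2 E; rewrite expgM mem_cycle.
have [_ /odd_expg_eq] := sdprod_cycle_decomp_uniq Kk1 (group1 K) E.
by rewrite odd_i oddM odd_s andbF.
Qed.

Lemma cycle_odd_divisor_inj k1 k2 e1 e2 : k1 \in K -> k2 \in K ->
  odd e1 -> odd e2 -> e1 %| #[h] -> e2 %| #[h] ->
  <[k1 * h ^+ e1]> = <[k2 * h ^+ e2]> -> (k1, e1) = (k2, e2).
Proof.
move=> Kk1 Kk2 odd1 odd2 dvd1 dvd2 E.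
have x1 : k1 * h ^+ e1 \in <[k2 * h ^+ e2]> by rewrite -E cycle_id.
have x2 : k2 * h ^+ e2 \in <[k1 * h ^+ e1]> by rewrite E cycle_id.
have [<- he1] := mem_cycle_odd Kk1 Kk2 odd1 odd2 x1.
have [_ he2] := mem_cycle_odd Kk2 Kk1 odd2 odd1 x2.
have /(congr1 (fun X : {set gT} => #|X|)) : <[h ^+ e1]> = <[h ^+ e2]>.
  by apply/eqP; rewrite eqEsubset !cycle_subG he1 he2.
rewrite -!orderE !orderXdiv // => /(congr1 (divn #[h])).
by rewrite !divnA // !mulKn ?order_gt0 // => ->.
Qed.

Local Notation cyclicG := [set C : {group gT} | (C \subset G) && cyclic C].
Local Notation subA := [set C : {group gT} | C \subset A].

Lemma perm_cyclic_notin_sdprod_expg2 :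
  perm_eq (enum (cyclicG :\: subA))
    [seq <[k * h ^+ e]>%G | k <- enum K, e <- [seq e <- divisors #[h] | odd e]].
Proof.
have h_gt0 := order_gt0 h.
apply: uniq_perm (enum_uniq _) _ _.
  apply: allpairs_uniq (enum_uniq _) (filter_uniq _ (divisors_uniq _)) _.
  move=> _ _ /allpairsP[[k1 e1] [Kk1 De1 ->]] /allpairsP[[k2 e2] [Kk2 De2 ->]] /=.
  move: Kk1 Kk2 De1 De2; rewrite !mem_enum !mem_filter -!dvdn_divisors //=.
  move=> Kk1 Kk2 /andP[odd1 dvd1] /andP[odd2 dvd2] /(congr1 val) /=.
  exact: cycle_odd_divisor_inj.
move=> C; rewrite mem_enum !inE; apply/idP/allpairsP.
  case/and3P=> nsCA sCG /cyclicP[x defC].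
  have [k Kk [i def_x]] : exists2 k, k \in K & exists i, x = k * h ^+ i.
    by apply: sdprod_cycle_decomp; rewrite (subsetP sCG) // defC cycle_id.
  have odd_i : odd i.
    by apply: contraR nsCA; rewrite defC cycle_subG def_x mem_sdprod_expg2.
  exists (k, gcdn #[h] i); rewrite /= mem_enum mem_filter -dvdn_divisors //.
  rewrite Kk dvdn_gcdl (dvdn_odd (dvdn_gcdr _ _) odd_i); split=> //.
  by apply: val_inj; rewrite /= defC def_x cycle_odd_expg_gcd.
case=> [[k e] /=]; rewrite mem_enum mem_filter -dvdn_divisors //.
case=> Kk /andP[odd_e _] ->.
rewrite !cycle_subG mem_sdprod_expg2 // odd_e cycle_cyclic andbT /=.
by rewrite groupM ?groupX // (subsetP sKG).
Qed.

Lemma ncyclic_sdprod_expg2 : cyclic K -> coprime #|K| (#[h] %/ 2) ->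
  ncyclic G = (ndivisors (#|K| * (#[h] %/ 2)) + #|K| * count odd (divisors #[h]))%N.
Proof.
move=> cycK coKh; have cycA := cyclic_sdprod_expg2 cycK coKh.
have cyclicG_subA : cyclicG :&: subA = subA.
  apply/setIidPr/subsetP=> C; rewrite !inE => sCA.
  by rewrite (subset_trans sCA sdprod_expg2_sub) (cyclicS sCA).
rewrite /ncyclic -(cardsID subA) cyclicG_subA card_subgroups_cyclic //.
rewrite card_sdprod_expg2 [#|_ :\: _|]cardE (perm_size perm_cyclic_notin_sdprod_expg2).
by rewrite size_allpairs size_filter -cardE.
Qed.

End InvertingSdprod.

Section Existence.
Local Open Scope group_scope.

Lemma inv_sdprod_C3_exists m : (1 < m)%N -> 2 %| m ->
  exists (gT : finGroupType) (G K H : {group gT}) (h : gT), inv_sdprod_C3 G K H h m.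
Proof.
move=> m_gt1 even_m; pose gT := Extremal.gtype 3 m 3.-1.
have /isoGrp_hom /existsP[[x y]] := @Grp_ext_dihedral 3 isT m m_gt1 even_m.
rewrite /= !xpair_eqE => /and4P[/eqP defG /eqP x3 /eqP ym /eqP xy].
have nXy : <[y]> \subset 'N(<[x]>).
  by rewrite cycle_subG inE -cycleJ xy cycleV.
have oG : #|[set: gT]| = (3 * m)%N.
  by rewrite card_ext_dihedral // -divn2; lia.
have dvd_x3 : #[x] %| 3 by rewrite order_dvdn x3.
have dvd_ym : #[y] %| m by rewrite order_dvdn ym.
have card_XY := mul_cardG <[x]> <[y]>.
rewrite -norm_joinEr // defG oG -!orderE in card_XY.
move: card_XY; set c := #|_ :&: _| => card_XY.
have c_gt0 : (0 < c)%N by exact: (cardG_gt0 (<[x]> :&: <[y]>)%G).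
have le_x3 := dvdn_leq (isT : 0 < 3)%N dvd_x3.
have le_ym := dvdn_leq (ltnW m_gt1) dvd_ym.
have le_xy := leq_mul le_x3 le_ym; have y_gt0 := order_gt0 y.
(* #[x] * #[y] = 3 m c with #[x] <= 3 and #[y] <= m: all bounds are tight. *)
have tiXY : c = 1%N by clearbody c; nia.
have ox : #[x] = 3%N by nia.
have oy : #[y] = m by nia.
exists gT, [set: gT]%G, <[x]>%G, <[y]>%G, y; split.
  by rewrite sdprodEY // ?defG //; apply/eqP; rewrite trivg_card1; apply/eqP.
split; first exact: cycle_cyclic.
split; first by rewrite -orderE.
split=> //; split=> // k /cycleP[i ->].
by rewrite conjXg xy expgVn.
Qed.
End Existence.

Section InvSdprodC3.
Variables (gT : finGroupType) (G K H : {group gT}) (h : gT).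

Lemma card_inv_sdprod_C3 m : inv_sdprod_C3 G K H h m -> #|G| = 3 * m.
Proof.
by case=> defG [_ [oK [defH [oh _]]]]; rewrite -(sdprod_card defG) oK defH -orderE oh.
Qed.

Lemma ncyclic_inv_sdprod_C3 u b : inv_sdprod_C3 G K H h (2 ^ u.+1 * 5 ^ b) ->
  ncyclic G = ndivisors #|G| + b.+1.
Proof.
move=> invG; rewrite (card_inv_sdprod_C3 invG).
case: invG => defG [cycK [oK [defH [oh invK]]]]; rewrite defH in defG.
have even_h : 2 %| #[h]%g by rewrite oh expnS -mulnA dvdn_mulr.
have half_h : #[h]%g %/ 2 = 2 ^ u * 5 ^ b by rewrite oh expnS -mulnA mulKn.
rewrite (ncyclic_sdprod_expg2 defG) ?oK ?half_h ?coprimeMr ?coprimeXr // oh.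
rewrite count_odd_divisors_pow2M ?oddX ?orbT // ndivisors_pfactor //.
by rewrite !ndivisors_3_pow2_pow5; nia.
Qed.

End InvSdprodC3.

Theorem mainTheorem15 (gamma : nat) (hgamma : 0 < gamma) :
  (forall N : nat, exists (gT : finGroupType) (G : {group gT}),
      N < #|G| /\ ncyclic G = ndivisors #|G| + gamma)
  /\
  (forall u : nat, 0 < u ->
     (exists (gT : finGroupType) (G K H : {group gT}) (h : gT),
         inv_sdprod_C3 G K H h (2 ^ u * 5 ^ (gamma - 1)))
     /\
     (forall (gT : finGroupType) (G K H : {group gT}) (h : gT),
         inv_sdprod_C3 G K H h (2 ^ u * 5 ^ (gamma - 1)) ->
         ncyclic G = ndivisors #|G| + gamma)).
Proof.
case: gamma hgamma => // b _; rewrite subn1 /=.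
have m_gt1 u : 1 < 2 ^ u.+1 * 5 ^ b.
  by rewrite (@leq_trans (2 ^ u.+1)) ?leq_pmulr ?expn_gt0 // -{1}(expn0 2) ltn_exp2l.
have even_m u : 2 %| 2 ^ u.+1 * 5 ^ b by rewrite expnS -mulnA dvdn_mulr.
split=> [N | [//|u] _].
  have [gT [G [K [H [h invG]]]]] := inv_sdprod_C3_exists (m_gt1 N) (even_m N).
  exists gT, G; split; last exact: ncyclic_inv_sdprod_C3 invG.
  have lt_N := ltn_expl N (isT : 1 < 2).
  have pos5 : 0 < 5 ^ b by rewrite expn_gt0.
  by rewrite (card_inv_sdprod_C3 invG) expnS; nia.
split; first exact: inv_sdprod_C3_exists.
by move=> gT G K H h; apply: ncyclic_inv_sdprod_C3.
Qed.
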